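(* Let $A$ be a Noetherian ring, $\mathcal{R}$ a standard graded ring with $\mathcal{R}_0=A$, and let $X\in\operatorname{^*Mod}_f(\mathcal{R})$ be quasi-finite. Then $\operatorname{Ass}_A X_n\subseteq\operatorname{Ass}_A X_{n+1}$ for all $n\gg0$.
   Context: A standard graded ring $\mathcal{R}=\bigoplus_{n\ge0}\mathcal{R}_n$ with $\mathcal{R}_0=A$ is a Noetherian $\mathbb{N}$-graded commutative ring generated as an $A$-algebra by finitely many elements of $\mathcal{R}_1$; $\mathcal{R}_+=\bigoplus_{n\ge1}\mathcal{R}_n$. $\operatorname{^*Mod}_f(\mathcal{R})$ is the full subcategory of graded $\mathcal{R}$-modules $X=\bigoplus_{n\in\mathbb{Z}}X_n$ with every $X_n$ a finitely generated $A$-module and $X_n=0$ for $n\ll0$. $H^0_{\mathcal{R}_+}(X)=\{x\in X:\mathcal{R}_+^k x=0\text{ for some }k\}$. A module $X\in\operatorname{^*Mod}_f(\mathcal{R})$ is quasi-finite if $H^0_{\mathcal{R}_+}(X)_n=0$ for all $n\gg0$. *)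

From HB Require Import structures.
From mathcomp Require Import all_boot all_order all_algebra.
Set Implicit Arguments. Unset Strict Implicit. Unset Printing Implicit Defensive.
Import Order.TTheory GRing.Theory Num.Theory.
Local Open Scope ring_scope.

Definition is_ideal (A : comPzRingType) (I : A -> Prop) : Prop :=
  I 0 /\ (forall x y, I x -> I y -> I (x + y)) /\ (forall a x, I x -> I (a * x)).

Definition fg_ideal (A : comPzRingType) (I : A -> Prop) : Prop :=
  exists s : seq A, (forall x, x \in s -> I x) /\
    forall x, I x -> exists c : 'I_(size s) -> A, x = \sum_(i < size s) c i * s`_i.

Definition noetherian_ring (A : comPzRingType) : Prop :=
  forall I : A -> Prop, is_ideal I -> fg_ideal I.

Definition prime_ideal (A : comPzRingType) (P : A -> Prop) : Prop :=
  is_ideal P /\ ~ P 1 /\ forall a b, P (a * b) -> P a \/ P b.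

Definition zmod_closedP (V : zmodType) (P : V -> Prop) : Prop :=
  P 0 /\ forall x y, P x -> P y -> P (x - y).

(* S = (+)_{n >= 0} Sd n, an N-graded commutative ring (internal direct sum). *)
Definition graded_ring (S : comPzRingType) (Sd : nat -> S -> Prop) : Prop :=
  (forall n, zmod_closedP (Sd n)) /\
  Sd 0%N 1 /\
  (forall m n a b, Sd m a -> Sd n b -> Sd (m + n)%N (a * b)) /\
  (forall r, exists (N : nat) (f : nat -> S),
      (forall n, Sd n (f n)) /\ r = \sum_(n < N) f n) /\
  (forall (N : nat) (f : nat -> S), (forall n, Sd n (f n)) ->
      \sum_(n < N) f n = 0 -> forall n, (n < N)%N -> f n = 0).

Definition in_Rplus (S : comPzRingType) (Sd : nat -> S -> Prop) (r : S) : Prop :=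
  exists (N : nat) (f : nat -> S),
    (forall n, Sd n (f n)) /\ r = \sum_(1 <= n < N) f n.

(* Standard graded ring with R_0 = A (A identified with R_0 via the ring
   isomorphism phi : A -> R_0): Noetherian, N-graded, generated as an
   A-algebra by finitely many elements of R_1. *)
Definition standard_graded (A S : comPzRingType) (phi : {rmorphism A -> S})
    (Sd : nat -> S -> Prop) : Prop :=
  graded_ring Sd /\ noetherian_ring S /\
  injective phi /\ (forall r, Sd 0%N r <-> exists a, r = phi a) /\
  exists s : seq S, (forall r, r \in s -> Sd 1%N r) /\
    forall P : S -> Prop,
      (forall a, P (phi a)) -> (forall r, r \in s -> P r) ->
      (forall x y, P x -> P y -> P (x + y)) ->
      (forall x y, P x -> P y -> P (x * y)) -> forall r, P r.

(* X = (+)_{n in Z} Xd n, a Z-graded S-module (internal direct sum). *)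
Definition graded_module (S : comPzRingType) (Sd : nat -> S -> Prop)
    (X : lmodType S) (Xd : int -> X -> Prop) : Prop :=
  (forall n, zmod_closedP (Xd n)) /\
  (forall m n r x, Sd m r -> Xd n x -> Xd (m%:Z + n) (r *: x)) /\
  (forall x, exists (lo : int) (N : nat) (f : int -> X),
      (forall n, Xd n (f n)) /\ x = \sum_(i < N) f (lo + i%:Z)) /\
  (forall (lo : int) (N : nat) (f : int -> X), (forall n, Xd n (f n)) ->
      \sum_(i < N) f (lo + i%:Z) = 0 ->
      forall i, (i < N)%N -> f (lo + i%:Z) = 0).

Definition fg_Asubmodule (A S : comPzRingType) (phi : {rmorphism A -> S})
    (X : lmodType S) (P : X -> Prop) : Prop :=
  exists s : seq X, (forall x, x \in s -> P x) /\
    forall x, P x -> exists c : 'I_(size s) -> A,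
      x = \sum_(i < size s) phi (c i) *: s`_i.

Definition in_ModF (A S : comPzRingType) (phi : {rmorphism A -> S})
    (Sd : nat -> S -> Prop) (X : lmodType S) (Xd : int -> X -> Prop) : Prop :=
  graded_module Sd Xd /\ (forall n, fg_Asubmodule phi (Xd n)) /\
  exists n0 : int, forall n, n < n0 -> forall x, Xd n x -> x = 0.

(* x in H^0_{R_+}(X): R_+^k x = 0 for some k, i.e. every product of k
   elements of R_+ kills x. *)
Definition in_H0_Rplus (S : comPzRingType) (Sd : nat -> S -> Prop)
    (X : lmodType S) (x : X) : Prop :=
  exists k : nat, forall rs : seq S, size rs = k ->
    (forall r, r \in rs -> in_Rplus Sd r) -> (\prod_(r <- rs) r) *: x = 0.

Definition quasi_finite (S : comPzRingType) (Sd : nat -> S -> Prop)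
    (X : lmodType S) (Xd : int -> X -> Prop) : Prop :=
  exists n0 : int, forall n, n0 <= n ->
    forall x, Xd n x -> in_H0_Rplus Sd x -> x = 0.

Definition in_Ass (A S : comPzRingType) (phi : {rmorphism A -> S})
    (X : lmodType S) (Xd : int -> X -> Prop) (n : int) (P : A -> Prop) : Prop :=
  prime_ideal P /\ exists x, Xd n x /\ forall a, P a <-> phi a *: x = 0.

From HB Require Import structures.
From mathcomp Require Import all_boot all_order all_algebra.
From mathcomp Require Import zify.
From Stdlib Require Import Classical.
Set Implicit Arguments. Unset Strict Implicit. Unset Printing Implicit Defensive.
Import Order.TTheory GRing.Theory Num.Theory.
Local Open Scope ring_scope.

(* Let x in X_n with ann_A(x) = P. Since ann_A(r x) contains P for every
   generator r of R_1, either some r x in X_(n+1) has annihilator exactly P,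
   or every r x is killed by some a_r outside P. In the second case the
   product a of the a_r lies outside P (P is prime) and y := a x is killed by
   all of R_1. Then R acts on y through A, so a homogeneous element of
   positive degree sends y into two different degrees at once and hence
   kills it: y lies in H^0_{R_+}(X)_n, which vanishes for n >> 0. Thus
   a x = 0, i.e. a in P, a contradiction. *)

Lemma scalerAC (S : comPzRingType) (X : lmodType S) (r t : S) (x : X) :
  r *: (t *: x) = t *: (r *: x).
Proof. by rewrite !scalerA mulrC. Qed.

Lemma graded_homog_eq0 (S : comPzRingType) (Sd : nat -> S -> Prop)
    (X : lmodType S) (Xd : int -> X -> Prop) (m n : int) (z : X) :
  graded_module Sd Xd -> m < n -> Xd m z -> Xd n z -> z = 0.
Proof.
move=> [Hzmod [_ [_ Huniq]]] ltmn Hm Hn.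
have [d def_n] : exists d : nat, n = m + d.+1%:Z.
  by exists `|n - m|.-1%N; lia.
have neq_mn : (m == n) = false by apply/eqP; lia.
(* [z] in degree [m] and [- z] in degree [n] are components of [0]. *)
pose f k := if k == m then z else if k == n then - z else 0.
have Hf k : Xd k (f k).
  rewrite /f; case: eqP => [->//|_]; case: eqP => [->|_]; last by case: (Hzmod k).
  by rewrite -sub0r; apply: (proj2 (Hzmod n)); first by case: (Hzmod n).
have sum_f : \sum_(i < d.+2) f (m + i%:Z) = 0.
  rewrite big_ord_recr big_ord_recl /= big1 => [|i _].
    by rewrite /f !addr0 eqxx -def_n [n == m]eq_sym neq_mn eqxx addrN.
  rewrite /f; case: eqP => [|_]; first by rewrite /bump /=; lia.
  by case: eqP => [|//]; have := ltn_ord i; rewrite /bump /=; lia.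
by have := Huniq m d.+2 f Hf sum_f 0%N isT; rewrite /f addr0 eqxx.
Qed.

Lemma prime_common_annihilator (A S : comPzRingType) (phi : {rmorphism A -> S})
    (X : lmodType S) (P : A -> Prop) (vs : seq X) :
  prime_ideal P ->
  (forall v, v \in vs -> exists a, ~ P a /\ phi a *: v = 0) ->
  exists a, ~ P a /\ forall v, v \in vs -> phi a *: v = 0.
Proof.
move=> [_ [notP1 primeP]]; elim: vs => [|v vs IH] Hann.
  by exists 1; split => // v.
have [a1 [Pa1 Ha1]] := Hann v (mem_head _ _).
have [a2 [Pa2 Ha2]] := IH (fun w wvs => Hann w (mem_behead (s := v :: vs) wvs)).
exists (a1 * a2); split; first by case/primeP.
move=> w; rewrite inE rmorphM => /orP [/eqP ->|wvs].
  by rewrite mulrC -scalerA Ha1 scaler0.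
by rewrite -scalerA Ha2 // scaler0.
Qed.

Section StandardGradedModule.

Variables (A S : comPzRingType) (phi : {rmorphism A -> S}).
Variables (Sd : nat -> S -> Prop) (X : lmodType S) (Xd : int -> X -> Prop).
Hypothesis graded_X : graded_module Sd Xd.
Hypothesis deg0_phi : forall a, Sd 0%N (phi a).
Variable gens : seq S.
Hypothesis gens_deg1 : forall r, r \in gens -> Sd 1%N r.
Hypothesis gens_generate : forall Q : S -> Prop,
  (forall a, Q (phi a)) -> (forall r, r \in gens -> Q r) ->
  (forall x y, Q x -> Q y -> Q (x + y)) ->
  (forall x y, Q x -> Q y -> Q (x * y)) -> forall r, Q r.

Lemma homog_scale (m : nat) (n : int) (r : S) (x : X) :
  Sd m r -> Xd n x -> Xd (m%:Z + n) (r *: x).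
Proof. by case: graded_X => _ [Hmul _]; apply: Hmul. Qed.

Lemma homog_scale_phi (n : int) (a : A) (x : X) : Xd n x -> Xd n (phi a *: x).
Proof. by move/(homog_scale (deg0_phi a)); rewrite add0r. Qed.

Lemma homog_scale_gen (n : int) (r : S) (x : X) :
  r \in gens -> Xd n x -> Xd (n + 1) (r *: x).
Proof. by move=> /gens_deg1 Hr /(homog_scale Hr); rewrite addrC. Qed.

Section KilledByGenerators.

Variables (n : int) (y : X).
Hypothesis y_homog : Xd n y.
Hypothesis gens_kill_y : forall r, r \in gens -> r *: y = 0.

Lemma scale_killed_by_gens (t : S) : exists c, t *: y = phi c *: y.
Proof.
elim/gens_generate: t => [c | r /gens_kill_y -> | t t' [c Hc] [c' Hc'] |
    t t' [c Hc] [c' Hc']].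
- by exists c.
- by exists 0; rewrite rmorph0 scale0r.
- by exists (c + c'); rewrite rmorphD !scalerDl Hc Hc'.
- exists (c' * c).
  by rewrite -scalerA Hc' scalerAC Hc scalerA rmorphM.
Qed.

Lemma homog_pos_kills (m : nat) (h : S) : Sd m h -> (0 < m)%N -> h *: y = 0.
Proof.
move=> Hh m_gt0; have [c Hc] := scale_killed_by_gens h.
apply: (graded_homog_eq0 (m := n) (n := m%:Z + n) graded_X).
- by rewrite ltrDr ltz_nat.
- by rewrite Hc; apply: homog_scale_phi.
- exact: homog_scale.
Qed.

Lemma killed_by_gens_H0 : in_H0_Rplus Sd y.
Proof.
exists 1%N => -[|t [|//]] // _ /(_ t (mem_head _ _)) [N [f [Hf ->]]].
rewrite big_seq1 scaler_suml big_nat big1 // => i /andP [i_gt0 _].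
exact: homog_pos_kills.
Qed.

End KilledByGenerators.

Lemma ass_succ (n : int) (P : A -> Prop) :
  (forall x, Xd n x -> in_H0_Rplus Sd x -> x = 0) ->
  in_Ass phi Xd n P -> in_Ass phi Xd (n + 1) P.
Proof.
move=> H0_vanish [primeP [x [Hx annP]]]; split => //.
have P_kills_gen_multiples r a : P a -> phi a *: (r *: x) = 0.
  by move/annP => Hax; rewrite scalerAC Hax scaler0.
apply: NNPP => no_gen.
have larger_ann v : v \in [seq r *: x | r <- gens] ->
    exists a, ~ P a /\ phi a *: v = 0.
  case/mapP => r r_gens ->; apply: NNPP => Hr; apply: no_gen.
  exists (r *: x); split; first exact: homog_scale_gen.
  move=> a; split; first exact: P_kills_gen_multiples.
  by move=> Ha; apply: NNPP => Pa; apply: Hr; exists a.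
have [a [Pa Ha]] := prime_common_annihilator primeP larger_ann.
have Hy : Xd n (phi a *: x) by exact: homog_scale_phi.
have gens_kill r : r \in gens -> r *: (phi a *: x) = 0.
  by move=> r_gens; rewrite scalerAC Ha //; apply: map_f.
by apply/Pa/annP/H0_vanish/(killed_by_gens_H0 Hy gens_kill).
Qed.

End StandardGradedModule.

Theorem proposition4p2 (A S : comPzRingType) (phi : {rmorphism A -> S})
    (Sd : nat -> S -> Prop) (X : lmodType S) (Xd : int -> X -> Prop) :
  noetherian_ring A -> standard_graded phi Sd -> in_ModF phi Sd Xd ->
  quasi_finite Sd Xd ->
  exists N : int, forall n : int, N <= n ->
    forall P : A -> Prop, in_Ass phi Xd n P -> in_Ass phi Xd (n + 1) P.
Proof.
move=> _ [_ [_ [_ [deg0 [gens [gens_deg1 gens_generate]]]]]] [graded_X _] [n0 Hq].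
have deg0_phi a : Sd 0%N (phi a) by apply/deg0; exists a.
exists n0 => n le_n0n P.
exact: (ass_succ graded_X deg0_phi gens_deg1 gens_generate (Hq n le_n0n)).
Qed.
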